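(* Let $\gamma>1$ and let $f\in\mathcal K_\infty$ satisfy $f(x)>x$ for all $x>0$. Then there exists $g\in\mathcal K$ such that $g(f(x))=\gamma\,g(x)$ for all $x\in\mathbb R_+$.
   Context: $\mathcal K$: continuous strictly increasing functions $\alpha:\mathbb R_+\to\mathbb R_+$ with $\alpha(0)=0$; $\mathcal K_\infty$: those $\alpha\in\mathcal K$ with $\lim_{x\to+\infty}\alpha(x)=+\infty$. *)

(* concrete reals R. Functions R_+ -> R_+ are modelled as
   functions R -> R whose behaviour only matters on [0, +oo). *)
From Stdlib Require Import Reals.
Open Scope R_scope.

Definition maps_Rplus (a : R -> R) : Prop :=
  forall x, 0 <= x -> 0 <= a x.

Definition continuous_Rplus (a : R -> R) : Prop :=
  forall x, 0 <= x ->
    forall eps, 0 < eps -> exists delta, 0 < delta /\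
      forall y, 0 <= y -> Rabs (y - x) < delta -> Rabs (a y - a x) < eps.

Definition strict_incr_Rplus (a : R -> R) : Prop :=
  forall x y, 0 <= x -> x < y -> a x < a y.

Definition class_K (a : R -> R) : Prop :=
  maps_Rplus a /\ continuous_Rplus a /\ strict_incr_Rplus a /\ a 0 = 0.

Definition class_Kinf (a : R -> R) : Prop :=
  class_K a /\ (forall M, exists N, 0 <= N /\ forall x, N <= x -> M <= a x).

From Stdlib Require Import Reals Lra Lia ClassicalEpsilon Classical Ranalysis5.
Open Scope R_scope.

(** The orbit [a n = f^n 1], [n ∈ Z] (negative iterates use the inverse of
    [f], which exists because [f] is in K_oo), increases from [0] to [+oo],
    so the intervals [[a n, a (n+1)) = f^n [1, f 1)] tile [(0, +oo)].  Map the
    fundamental domain [[1, f 1)] of [f] affinely onto the fundamental domain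
    [[1, gamma)] of [x ↦ gamma x] and transport it by
    [g (f^n y) = gamma^n g y].  The resulting [g] is strictly increasing and
    onto [R_+], hence continuous. *)

Definition class_Kmono (u : R -> R) : Prop :=
  maps_Rplus u /\ strict_incr_Rplus u /\ u 0 = 0.

Definition onto_Rplus (u : R -> R) : Prop :=
  forall v, 0 <= v -> exists x, 0 <= x /\ u x = v.

Lemma class_K_Kmono u : class_K u -> class_Kmono u.
Proof. intros (Hm & _ & Hi & H0). exact (conj Hm (conj Hi H0)). Qed.

Lemma Kmono_le u x y : class_Kmono u -> 0 <= x -> x <= y -> u x <= u y.
Proof.
  intros (_ & Hi & _) Hx Hxy.
  destruct (Req_dec x y) as [->|Hne]; [lra|].
  left; apply Hi; lra.
Qed.

Lemma Kmono_lt_inv u x y : class_Kmono u -> 0 <= y -> u x < u y -> x < y.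
Proof.
  intros Hu Hy Hlt. destruct (Rlt_le_dec x y) as [|Hyx]; [assumption|].
  pose proof (Kmono_le u y x Hu Hy Hyx). lra.
Qed.

Lemma Kmono_iter u k : class_Kmono u -> class_Kmono (Nat.iter k u).
Proof.
  intros (Km & Ki & K0).
  induction k as [|k (Hm & Hi & H0)]; split; try split; simpl.
  - intros x Hx; exact Hx.
  - intros x y _ Hxy; exact Hxy.
  - reflexivity.
  - intros x Hx; apply Km, Hm, Hx.
  - intros x y Hx Hxy; apply Ki; [apply Hm, Hx | apply Hi; assumption].
  - rewrite H0; exact K0.
Qed.

(* No jumps: [u y] is squeezed between [u x1 = u x - eps/2] and
   [u x2 = u x + eps/2], the lower bound being [0] when [u x <= eps/2]. *)
Lemma Kmono_onto_continuous u : class_Kmono u -> onto_Rplus u -> continuous_Rplus u.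
Proof.
  intros Hu Honto x Hx eps Heps.
  pose proof Hu as (Hm & Hi & _).
  pose proof (Hm x Hx) as Hux.
  destruct (Honto (u x + eps / 2)) as (x2 & Hx2 & E2); [lra|].
  assert (x < x2) by (apply (Kmono_lt_inv u); auto; lra).
  destruct (Rle_lt_dec (u x) (eps / 2)).
  - exists (x2 - x); split; [lra|]. intros y Hy Hyx.
    assert (Hyx2 : y < x2) by (apply Rabs_def2 in Hyx; lra).
    pose proof (Hi y x2 Hy Hyx2). pose proof (Hm y Hy).
    apply Rabs_def1; lra.
  - destruct (Honto (u x - eps / 2)) as (x1 & Hx1 & E1); [lra|].
    assert (x1 < x) by (apply (Kmono_lt_inv u); auto; lra).
    exists (Rmin (x2 - x) (x - x1)); split; [apply Rmin_glb_lt; lra|].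
    intros y Hy Hyx.
    pose proof (Rmin_l (x2 - x) (x - x1)). pose proof (Rmin_r (x2 - x) (x - x1)).
    apply Rabs_def2 in Hyx.
    pose proof (Hi y x2 Hy ltac:(lra)). pose proof (Hi x1 y Hx1 ltac:(lra)).
    apply Rabs_def1; lra.
Qed.

Lemma class_K_of_Kmono_onto u : class_Kmono u -> onto_Rplus u -> class_K u.
Proof.
  intros Hu Honto. pose proof (Kmono_onto_continuous u Hu Honto) as Hc.
  destruct Hu as (Hm & Hi & H0). exact (conj Hm (conj Hc (conj Hi H0))).
Qed.

Lemma continuity_pt_Rmax0 u a :
  continuous_Rplus u -> 0 <= a -> continuity_pt (fun t => u (Rmax 0 t)) a.
Proof.
  intros Hc Ha eps Heps. destruct (Hc a Ha eps Heps) as (d & Hd & Hd').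
  exists d; split; [exact Hd|]. intros x [_ Hx]. simpl in *; unfold R_dist in *.
  rewrite (Rmax_right 0 a) by lra. apply Hd'; [apply Rmax_l|].
  apply Rle_lt_trans with (Rabs (x - a)); [|exact Hx].
  unfold Rmax; destruct (Rle_dec 0 x); [lra|].
  apply Rabs_def2 in Hx. rewrite Rabs_left1, Rabs_left1; lra.
Qed.

Lemma class_Kinf_onto u : class_Kinf u -> onto_Rplus u.
Proof.
  intros ((Hm & Hc & Hi & H0) & Hinf) y Hy.
  destruct (Req_dec y 0) as [->|Hy0]; [exists 0; split; [lra|exact H0]|].
  destruct (Hinf (y + 1)) as (N & HN & HuN). specialize (HuN N (Rle_refl N)).
  assert (0 < N) by (destruct HN as [|<-]; [assumption|lra]).
  destruct (IVT_interv (fun t => u (Rmax 0 t) - y) 0 N) as (z & Hz & Hz').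
  - intros b Hb. apply (continuity_pt_minus (fun t => u (Rmax 0 t)) (fct_cte y)).
    + apply continuity_pt_Rmax0; [exact Hc | lra].
    + apply continuity_pt_const. intros ? ?; reflexivity.
  - assumption.
  - rewrite Rmax_right by lra. lra.
  - rewrite Rmax_right by lra. lra.
  - exists z. rewrite Rmax_right in Hz' by lra. split; lra.
Qed.

Definition Rplus_inv (u : R -> R) (y : R) : R :=
  epsilon (inhabits 0) (fun x => 0 <= x /\ u x = y).

Lemma Rplus_inv_spec u y :
  onto_Rplus u -> 0 <= y -> 0 <= Rplus_inv u y /\ u (Rplus_inv u y) = y.
Proof. intros Honto Hy. exact (epsilon_spec _ _ (Honto y Hy)). Qed.

Lemma Rplus_inv_r u y : onto_Rplus u -> 0 <= y -> u (Rplus_inv u y) = y.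
Proof. intros Honto Hy. apply Rplus_inv_spec; assumption. Qed.

Lemma Rplus_inv_l u x :
  class_Kmono u -> onto_Rplus u -> 0 <= x -> Rplus_inv u (u x) = x.
Proof.
  intros Hu Honto Hx. pose proof (proj1 Hu x Hx) as Hux.
  destruct (Rplus_inv_spec u (u x) Honto Hux) as [Hv Hv'].
  destruct (total_order_T (Rplus_inv u (u x)) x) as [[Hl|He]|Hl]; [|exact He|].
  - pose proof (proj1 (proj2 Hu) _ _ Hv Hl). lra.
  - pose proof (proj1 (proj2 Hu) _ _ Hx Hl). lra.
Qed.

Lemma Rplus_inv_Kmono u : class_Kmono u -> onto_Rplus u -> class_Kmono (Rplus_inv u).
Proof.
  intros Hu Honto. split; [|split].
  - intros y Hy. apply Rplus_inv_spec; assumption.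
  - intros x y Hx Hxy. apply (Kmono_lt_inv u); [exact Hu | apply Rplus_inv_spec; [assumption | lra] |].
    rewrite !Rplus_inv_r by (assumption || lra). exact Hxy.
  - rewrite <- (proj2 (proj2 Hu)) at 1. apply Rplus_inv_l; [assumption | assumption | lra].
Qed.

Section IncreasingZSequences.

Variable s : Z -> R.

Lemma zseq_unbounded (tau : R -> R) :
  (forall n, 0 < s n) -> (forall n, s n = tau (s (Z.succ n))) ->
  (forall x y, 0 <= x -> x <= y -> tau x <= tau y) ->
  (forall y, 0 < y -> tau y < y) -> forall x, exists k, x < s k.
Proof.
  intros Hpos Hst Hmono Hlt x. apply NNPP; intro Hn.
  assert (Hb : forall k, s k <= x).
  { intro k. destruct (Rle_lt_dec (s k) x); [assumption|]. exfalso; eauto. }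
  destruct (completeness (fun y => exists k, y = s k)) as (L & HL1 & HL2).
  { exists x. intros y [k ->]. apply Hb. }
  { exists (s 0%Z); eauto. }
  assert (s 0%Z <= L) by (apply HL1; eauto).
  pose proof (Hpos 0%Z).
  assert (L <= tau L).
  { apply HL2. intros y [k ->]. rewrite Hst. apply Hmono.
    - left; apply Hpos.
    - apply HL1; eauto. }
  pose proof (Hlt L ltac:(lra)). lra.
Qed.

Lemma zseq_small (sigma : R -> R) :
  (forall n, 0 < s n) -> (forall n, s (Z.succ n) = sigma (s n)) ->
  (forall x y, 0 <= x -> x <= y -> sigma x <= sigma y) ->
  (forall y, 0 < y -> y < sigma y) -> forall x, 0 < x -> exists k, s k <= x.
Proof.
  intros Hpos Hst Hmono Hlt x Hx. apply NNPP; intro Hn.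
  assert (Hb : forall k, x < s k).
  { intro k. destruct (Rle_lt_dec (s k) x); [|assumption]. exfalso; eauto. }
  destruct (completeness (fun y => exists k, y = - s k)) as (M & HM1 & HM2).
  { exists (- x). intros y [k ->]. specialize (Hb k); lra. }
  { exists (- s 0%Z); eauto. }
  assert (M <= - x) by (apply HM2; intros y [k ->]; specialize (Hb k); lra).
  assert (Hlow : forall k, - M <= s k).
  { intro k. assert (- s k <= M) by (apply HM1; eauto). lra. }
  assert (M <= - sigma (- M)).
  { apply HM2. intros y [k ->].
    rewrite <- (Z.succ_pred k), Hst.
    assert (sigma (- M) <= sigma (s (Z.pred k))) by (apply Hmono; [lra | apply Hlow]).
    lra. }
  pose proof (Hlt (- M) ltac:(lra)). lra.
Qed.

Hypothesis s_incr : forall n, s n < s (Z.succ n).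

Lemma zseq_lt i j : (i < j)%Z -> s i < s j.
Proof.
  intros Hij.
  assert (H : forall m : nat, s i < s (i + 1 + Z.of_nat m)%Z).
  { induction m as [|m IH].
    - replace (i + 1 + Z.of_nat 0)%Z with (Z.succ i) by lia. apply s_incr.
    - replace (i + 1 + Z.of_nat (S m))%Z with (Z.succ (i + 1 + Z.of_nat m)) by lia.
      specialize (s_incr (i + 1 + Z.of_nat m)%Z). lra. }
  specialize (H (Z.to_nat (j - i - 1))).
  replace (i + 1 + Z.of_nat (Z.to_nat (j - i - 1)))%Z with j in H by lia. exact H.
Qed.

Lemma zseq_le i j : (i <= j)%Z -> s i <= s j.
Proof.
  intros Hij. destruct (Z.eq_dec i j) as [->|]; [lra|].
  left; apply zseq_lt; lia.
Qed.

Lemma zseq_le_inv i j : s i <= s j -> (i <= j)%Z.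
Proof.
  intros H. destruct (Z.le_gt_cases i j) as [|Hji]; [assumption|].
  pose proof (zseq_lt j i Hji). lra.
Qed.

Lemma zseq_floor_unique n m x :
  s n <= x < s (Z.succ n) -> s m <= x < s (Z.succ m) -> n = m.
Proof.
  intros Hn Hm. destruct (Z.lt_total n m) as [Hnm|[Hnm|Hmn]]; [|exact Hnm|].
  - pose proof (zseq_le (Z.succ n) m ltac:(lia)). lra.
  - pose proof (zseq_le (Z.succ m) n ltac:(lia)). lra.
Qed.

Lemma zseq_floor (Hup : forall x, exists k, x < s k) x :
  (exists k, s k <= x) -> exists n, s n <= x < s (Z.succ n).
Proof.
  intros [k0 Hk0]. destruct (Hup x) as [k1 Hk1].
  assert (Hind : forall m : nat, x < s (k0 + Z.of_nat m)%Z ->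
            exists n, s n <= x < s (Z.succ n)).
  { induction m as [|m IH]; intro H.
    - rewrite Z.add_0_r in H. lra.
    - destruct (Rlt_le_dec x (s (k0 + Z.of_nat m)%Z)); [auto|].
      exists (k0 + Z.of_nat m)%Z; split; [assumption|].
      replace (Z.succ (k0 + Z.of_nat m)) with (k0 + Z.of_nat (S m))%Z by lia.
      exact H. }
  assert (k0 <= k1)%Z by (apply zseq_le_inv; lra).
  apply (Hind (Z.to_nat (k1 - k0))).
  replace (k0 + Z.of_nat (Z.to_nat (k1 - k0)))%Z with k1 by lia. exact Hk1.
Qed.

End IncreasingZSequences.

Lemma powerRZ_succ x n : x <> 0 -> powerRZ x (Z.succ n) = x * powerRZ x n.
Proof. intros Hx. rewrite <- Z.add_1_r, powerRZ_add by exact Hx. simpl. ring. Qed.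

Lemma powerRZ_succ_gt x n : 1 < x -> powerRZ x n < powerRZ x (Z.succ n).
Proof.
  intros Hx. rewrite powerRZ_succ by lra.
  pose proof (powerRZ_lt x n ltac:(lra)). nra.
Qed.

Lemma powerRZ_floor x v : 1 < x -> 0 < v ->
  exists n, powerRZ x n <= v < powerRZ x (Z.succ n).
Proof.
  intros Hx Hv.
  assert (Hpos : forall n, 0 < powerRZ x n) by (intro; apply powerRZ_lt; lra).
  apply zseq_floor; [intro; apply powerRZ_succ_gt, Hx | |].
  - apply (zseq_unbounded _ (fun y => y / x) Hpos).
    + intro n. rewrite powerRZ_succ by lra. field. lra.
    + intros y z Hy Hyz. apply Rmult_le_compat_r; [|exact Hyz].
      left; apply Rinv_0_lt_compat; lra.
    + intros y Hy. apply Rmult_lt_reg_r with x; [lra|].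
      unfold Rdiv. rewrite Rmult_assoc, Rinv_l by lra. nra.
  - apply (zseq_small _ (fun y => x * y) Hpos); [| intros; nra | intros; nra | exact Hv].
    intro n. apply powerRZ_succ. lra.
Qed.

Section ZIterates.

Variables f phi : R -> R.
Hypothesis f_Kmono : class_Kmono f.
Hypothesis phi_Kmono : class_Kmono phi.
Hypothesis f_phi : forall y, 0 <= y -> f (phi y) = y.
Hypothesis phi_f : forall x, 0 <= x -> phi (f x) = x.

Definition iterz (n : Z) : R -> R :=
  if (0 <=? n)%Z then Nat.iter (Z.to_nat n) f else Nat.iter (Z.to_nat (- n)) phi.

Lemma iterz_Kmono n : class_Kmono (iterz n).
Proof. unfold iterz. destruct (0 <=? n)%Z; apply Kmono_iter; assumption. Qed.

Lemma iterz_succ n x : 0 <= x -> iterz (Z.succ n) x = f (iterz n x).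
Proof.
  intros Hx. unfold iterz. destruct (Z.le_gt_cases 0 n).
  - rewrite (proj2 (Z.leb_le 0 (Z.succ n))), (proj2 (Z.leb_le 0 n)) by lia.
    replace (Z.to_nat (Z.succ n)) with (S (Z.to_nat n)) by lia. apply Nat.iter_succ.
  - destruct (Z.eq_dec n (-1)) as [->|Hn].
    + simpl. symmetry; apply f_phi, Hx.
    + rewrite (proj2 (Z.leb_gt 0 (Z.succ n))), (proj2 (Z.leb_gt 0 n)) by lia.
      replace (Z.to_nat (- n)) with (S (Z.to_nat (- Z.succ n))) by lia.
      rewrite Nat.iter_succ, f_phi; [reflexivity|].
      apply Kmono_iter; assumption.
Qed.

Lemma iterz_pred n x : 0 <= x -> iterz (Z.pred n) x = phi (iterz n x).
Proof.
  intros Hx. rewrite <- (Z.succ_pred n) at 2.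
  rewrite iterz_succ, phi_f by (try apply iterz_Kmono; assumption). reflexivity.
Qed.

Lemma iterz_add m k x : 0 <= x -> iterz m (iterz k x) = iterz (m + k) x.
Proof.
  intros Hx. assert (Hkx : 0 <= iterz k x) by (apply iterz_Kmono, Hx).
  induction m as [|m IH|m IH] using Z.peano_ind.
  - reflexivity.
  - rewrite iterz_succ, IH, Z.add_succ_l, iterz_succ by assumption. reflexivity.
  - rewrite iterz_pred, IH, Z.add_pred_l, iterz_pred by assumption. reflexivity.
Qed.

End ZIterates.

Section SchroederEquation.

Variables (gamma : R) (f phi : R -> R).
Hypothesis gamma_gt_1 : 1 < gamma.
Hypothesis f_Kmono : class_Kmono f.
Hypothesis phi_Kmono : class_Kmono phi.
Hypothesis f_phi : forall y, 0 <= y -> f (phi y) = y.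
Hypothesis phi_f : forall x, 0 <= x -> phi (f x) = x.
Hypothesis f_expansive : forall x, 0 < x -> x < f x.

Local Notation F := (iterz f phi).
Local Notation orbit n := (iterz f phi n 1).

Lemma phi_contractive y : 0 < y -> phi y < y.
Proof.
  intros Hy. pose proof (proj1 phi_Kmono y ltac:(lra)) as Hpy.
  destruct (Req_dec (phi y) 0) as [E|E].
  - pose proof (f_phi y ltac:(lra)) as Hfy. rewrite E, (proj2 (proj2 f_Kmono)) in Hfy. lra.
  - pose proof (f_expansive (phi y) ltac:(lra)). rewrite f_phi in H by lra. exact H.
Qed.

Lemma orbit_pos n : 0 < orbit n.
Proof.
  destruct (iterz_Kmono f phi f_Kmono phi_Kmono n) as (_ & Hi & H0).
  rewrite <- H0 at 1. apply Hi; lra.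
Qed.

Lemma orbit_succ n : orbit (Z.succ n) = f (orbit n).
Proof. apply iterz_succ; auto; lra. Qed.

Lemma orbit_incr n : orbit n < orbit (Z.succ n).
Proof. rewrite orbit_succ. apply f_expansive, orbit_pos. Qed.

Lemma orbit_unbounded x : exists k, x < orbit k.
Proof.
  apply (zseq_unbounded _ phi orbit_pos).
  - intro n. rewrite orbit_succ, phi_f; [reflexivity|]. left; apply orbit_pos.
  - intros y z Hy Hyz. apply Kmono_le; assumption.
  - exact phi_contractive.
Qed.

Lemma orbit_small x : 0 < x -> exists k, orbit k <= x.
Proof.
  apply (zseq_small _ f orbit_pos orbit_succ); [|exact f_expansive].
  intros y z Hy Hyz. apply Kmono_le; assumption.
Qed.

Lemma iterz_fundamental_domain n y :
  1 <= y < f 1 -> orbit n <= F n y < orbit (Z.succ n).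
Proof.
  intros Hy. pose proof (iterz_Kmono f phi f_Kmono phi_Kmono n) as HF.
  replace (orbit (Z.succ n)) with (F n (f 1))
    by (change (f 1) with (F 1 1); rewrite iterz_add, Z.add_1_r; auto; lra).
  split; [apply Kmono_le; auto; lra | apply HF; lra].
Qed.

Definition orbit_index (x : R) : Z :=
  epsilon (inhabits 0%Z) (fun n => orbit n <= x < orbit (Z.succ n)).

Lemma orbit_index_spec x :
  0 < x -> orbit (orbit_index x) <= x < orbit (Z.succ (orbit_index x)).
Proof.
  intros Hx. unfold orbit_index. apply epsilon_spec, zseq_floor;
    [exact orbit_incr | exact orbit_unbounded | exact (orbit_small x Hx)].
Qed.

Lemma orbit_index_iterz n y : 1 <= y < f 1 -> orbit_index (F n y) = n.
Proof.
  intros Hy. pose proof (iterz_fundamental_domain n y Hy) as Hn.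
  apply (zseq_floor_unique _ orbit_incr _ _ (F n y)); [|exact Hn].
  apply orbit_index_spec. pose proof (orbit_pos n). lra.
Qed.

Lemma fundamental_domain_decomposition x :
  0 < x -> exists n y, 1 <= y < f 1 /\ x = F n y.
Proof.
  intros Hx. destruct (orbit_index_spec x Hx) as [H1 H2]. set (n := orbit_index x) in *.
  exists n, (F (- n) x).
  pose proof (iterz_Kmono f phi f_Kmono phi_Kmono (- n)) as HF.
  assert (Hback : forall k, F (- n) (F k 1) = F (k - n) 1)
    by (intro k; rewrite iterz_add by (auto; lra); f_equal; lia).
  split; [split|].
  - replace 1 with (F (- n) (orbit n)) at 1 by (rewrite Hback, Z.sub_diag; reflexivity).
    apply Kmono_le; auto. left; apply orbit_pos.
  - replace (f 1) with (F (- n) (orbit (Z.succ n)))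
      by (rewrite Hback; replace (Z.succ n - n)%Z with 1%Z by lia; reflexivity).
    apply HF; lra.
  - rewrite iterz_add, Z.add_opp_diag_r by (auto; lra). reflexivity.
Qed.

Definition fd_map (y : R) : R := 1 + (gamma - 1) / (f 1 - 1) * (y - 1).

Lemma f_1_gt_1 : 1 < f 1.
Proof. apply f_expansive; lra. Qed.

Lemma fd_map_lt y z : y < z -> fd_map y < fd_map z.
Proof.
  intros Hyz. unfold fd_map. pose proof f_1_gt_1.
  assert (0 < (gamma - 1) / (f 1 - 1)) by (apply Rdiv_lt_0_compat; lra). nra.
Qed.

Lemma fd_map_range y : 1 <= y < f 1 -> 1 <= fd_map y < gamma.
Proof.
  intros Hy. pose proof f_1_gt_1.
  assert (fd_map 1 = 1) by (unfold fd_map; ring).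
  assert (fd_map (f 1) = gamma) by (unfold fd_map; field; lra).
  destruct (Req_dec y 1) as [->|]; [lra|].
  pose proof (fd_map_lt 1 y ltac:(lra)). pose proof (fd_map_lt y (f 1) ltac:(lra)). lra.
Qed.

Lemma fd_map_onto w : 1 <= w < gamma -> exists y, 1 <= y < f 1 /\ fd_map y = w.
Proof.
  intros Hw. pose proof f_1_gt_1.
  exists (1 + (w - 1) * (f 1 - 1) / (gamma - 1)).
  assert (0 <= (w - 1) * (f 1 - 1) / (gamma - 1))
    by (unfold Rdiv; apply Rmult_le_pos; [nra | left; apply Rinv_0_lt_compat; lra]).
  assert ((w - 1) * (f 1 - 1) / (gamma - 1) < f 1 - 1).
  { apply Rmult_lt_reg_r with (gamma - 1); [lra|].
    unfold Rdiv. rewrite Rmult_assoc, Rinv_l by lra. nra. }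
  split; [lra|]. unfold fd_map. field. lra.
Qed.

Definition schroeder (x : R) : R :=
  if Rle_dec x 0 then 0
  else powerRZ gamma (orbit_index x) * fd_map (F (- orbit_index x) x).

Lemma schroeder_0 : schroeder 0 = 0.
Proof. unfold schroeder. destruct (Rle_dec 0 0); [reflexivity | lra]. Qed.

Lemma schroeder_iterz n y :
  1 <= y < f 1 -> schroeder (F n y) = powerRZ gamma n * fd_map y.
Proof.
  intros Hy. pose proof (iterz_fundamental_domain n y Hy). pose proof (orbit_pos n).
  unfold schroeder. destruct (Rle_dec (F n y) 0); [lra|].
  rewrite orbit_index_iterz, iterz_add, Z.add_opp_diag_l by (auto; lra). reflexivity.
Qed.

Lemma schroeder_functional_eq x : 0 <= x -> schroeder (f x) = gamma * schroeder x.
Proof.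
  intros Hx. destruct (Req_dec x 0) as [->|Hx0].
  { rewrite (proj2 (proj2 f_Kmono)), schroeder_0. ring. }
  destruct (fundamental_domain_decomposition x ltac:(lra)) as (n & y & Hy & ->).
  rewrite <- iterz_succ, !schroeder_iterz, powerRZ_succ by (auto; lra). ring.
Qed.

Lemma schroeder_pos x : 0 < x -> 0 < schroeder x.
Proof.
  intros Hx. destruct (fundamental_domain_decomposition x Hx) as (n & y & Hy & ->).
  rewrite schroeder_iterz by exact Hy. pose proof (fd_map_range y Hy).
  pose proof (powerRZ_lt gamma n ltac:(lra)). nra.
Qed.

Lemma schroeder_strict_incr : strict_incr_Rplus schroeder.
Proof.
  intros x z Hx Hxz.
  destruct (Req_dec x 0) as [->|Hx0]; [rewrite schroeder_0; apply schroeder_pos; lra|].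
  destruct (fundamental_domain_decomposition x ltac:(lra)) as (n & y & Hy & ->).
  destruct (fundamental_domain_decomposition z ltac:(lra)) as (m & w & Hw & ->).
  pose proof (iterz_fundamental_domain n y Hy) as Hny.
  pose proof (iterz_fundamental_domain m w Hw) as Hmw.
  rewrite !schroeder_iterz by assumption.
  pose proof (fd_map_range y Hy) as Hfy. pose proof (fd_map_range w Hw) as Hfw.
  pose proof (powerRZ_lt gamma n ltac:(lra)) as Hpn.
  destruct (Z.lt_total n m) as [Hnm|[<-|Hmn]].
  - assert (Hpm : powerRZ gamma (Z.succ n) <= powerRZ gamma m)
      by (apply zseq_le; [intro; apply powerRZ_succ_gt, gamma_gt_1 | lia]).
    rewrite powerRZ_succ in Hpm by lra.
    assert (powerRZ gamma n * fd_map y < powerRZ gamma n * gamma) by nra.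
    assert (powerRZ gamma m <= powerRZ gamma m * fd_map w)
      by (pose proof (powerRZ_lt gamma m ltac:(lra)); nra).
    lra.
  - apply Rmult_lt_compat_l; [assumption|]. apply fd_map_lt.
    apply (Kmono_lt_inv (F n)); [apply iterz_Kmono; assumption | lra | assumption].
  - pose proof (zseq_le (fun k => orbit k) orbit_incr (Z.succ m) n ltac:(lia)).
    lra.
Qed.

Lemma schroeder_onto : onto_Rplus schroeder.
Proof.
  intros v Hv. destruct (Req_dec v 0) as [->|Hv0]; [exists 0; split; [lra | exact schroeder_0]|].
  destruct (powerRZ_floor gamma v gamma_gt_1 ltac:(lra)) as (n & Hn1 & Hn2).
  rewrite powerRZ_succ in Hn2 by lra. pose proof (powerRZ_lt gamma n ltac:(lra)).
  destruct (fd_map_onto (v / powerRZ gamma n)) as (y & Hy & Ey).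
  { split; [apply Rmult_le_reg_r with (powerRZ gamma n) | apply Rmult_lt_reg_r with (powerRZ gamma n)];
      unfold Rdiv; rewrite ?Rmult_assoc, ?Rinv_l; lra. }
  exists (F n y). split.
  - apply iterz_Kmono; [assumption | assumption | lra].
  - rewrite schroeder_iterz, Ey by exact Hy. field. lra.
Qed.

Lemma schroeder_class_K : class_K schroeder.
Proof.
  apply class_K_of_Kmono_onto; [|exact schroeder_onto].
  split; [|split; [exact schroeder_strict_incr | exact schroeder_0]].
  intros x Hx. destruct (Req_dec x 0) as [->|]; [rewrite schroeder_0; lra|].
  left; apply schroeder_pos; lra.
Qed.

End SchroederEquation.

Theorem mainTheorem14 (gamma : R) (f : R -> R) :
  1 < gamma ->
  class_Kinf f ->
  (forall x, 0 < x -> f x > x) ->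
  exists g : R -> R, class_K g /\ (forall x, 0 <= x -> g (f x) = gamma * g x).
Proof.
  intros Hgamma Hf Hexp.
  pose proof (class_Kinf_onto f Hf) as Honto.
  pose proof (class_K_Kmono f (proj1 Hf)) as Hmono.
  pose proof (Rplus_inv_Kmono f Hmono Honto) as Hinv.
  pose proof (Rplus_inv_r f) as Hfinv. pose proof (Rplus_inv_l f) as Hinvf.
  exists (schroeder gamma f (Rplus_inv f)). split.
  - apply schroeder_class_K; auto.
  - intros x Hx. apply schroeder_functional_eq; auto.
Qed.
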